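(* Let $\mathcal{LS}_{\mathfrak{A}_1}$ be the operad (variety) of left-symmetric algebras over a field of characteristic $0$ satisfying the identity $(ab)c+(ba)c+(ac)b+(ca)b+(bc)a+(cb)a=0$. Its Koszul dual operad $\mathcal{LS}_{\mathfrak{A}_1}^{(!)}$ is the operad of alternative algebras satisfying the left-commutative identity $a(bc)=b(ac)$.
   Context: A left-symmetric algebra is an algebra whose associator $(a,b,c)=(ab)c-a(bc)$ satisfies $(a,b,c)=(b,a,c)$. An algebra is alternative if $(a,a,b)=0=(a,b,b)$. The Koszul dual of a binary quadratic operad is taken in the sense of Ginzburg–Kapranov; equivalently, $\mathcal{P}^{(!)}$ is the quadratic operad whose algebras $U$ are defined by exactly those degree-3 identities making $S\otimes U$, with product $(a\otimes u)(b\otimes v)=ab\otimes uv$, Lie-admissible (its commutator satisfies the Jacobi identity) for every $\mathcal{P}$-algebra $S$. *)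

From HB Require Import structures.
From mathcomp Require Import all_boot all_order all_algebra all_fingroup.
Set Implicit Arguments. Unset Strict Implicit. Unset Printing Implicit Defensive.
Import GRing.Theory.
Local Open Scope ring_scope.

Definition bilinear_prod (K : fieldType) (A : lmodType K) (mul : A -> A -> A) :=
  (forall (k : K) (a b c : A), mul (k *: a + b) c = k *: mul a c + mul b c) /\
  (forall (k : K) (a b c : A), mul a (k *: b + c) = k *: mul a b + mul a c).

Definition alg_class (K : fieldType) := forall A : lmodType K, (A -> A -> A) -> Prop.

Definition assoc (K : fieldType) (A : lmodType K) (mul : A -> A -> A) (a b c : A) :=
  mul (mul a b) c - mul a (mul b c).

Definition left_symmetric (K : fieldType) (A : lmodType K) (mul : A -> A -> A) :=
  forall a b c : A, assoc mul a b c = assoc mul b a c.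

Definition identA1 (K : fieldType) (A : lmodType K) (mul : A -> A -> A) :=
  forall a b c : A,
    mul (mul a b) c + mul (mul b a) c + mul (mul a c) b + mul (mul c a) b
    + mul (mul b c) a + mul (mul c b) a = 0.

Definition alternative (K : fieldType) (A : lmodType K) (mul : A -> A -> A) :=
  forall a b : A, assoc mul a a b = 0 /\ assoc mul a b b = 0.

Definition left_commutative (K : fieldType) (A : lmodType K) (mul : A -> A -> A) :=
  forall a b c : A, mul a (mul b c) = mul b (mul a c).

Definition LS_A1 (K : fieldType) : alg_class K :=
  fun A mul => left_symmetric mul /\ identA1 mul.

Definition Alt_LC (K : fieldType) : alg_class K :=
  fun A mul => alternative mul /\ left_commutative mul.

(* Arity-3 component of the free (magmatic) binary operad:             *)
(* multilinear degree-3 nonassociative polynomials in x_0, x_1, x_2.   *)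
(* Basis monomials are indexed by (s, b) with s : 'S_3 and b : bool:   *)
(*   (s, false) = (x_{s 0} x_{s 1}) x_{s 2},                           *)
(*   (s, true)  =  x_{s 0} (x_{s 1} x_{s 2}).                          *)
(* An element is a coefficient function on these 12 monomials.         *)
Definition mono := ('S_3 * bool)%type.

Definition mono_eval (K : fieldType) (A : lmodType K) (mul : A -> A -> A)
  (x : 'I_3 -> A) (m : mono) : A :=
  let s := m.1 in
  if m.2 then mul (x (s 0)) (mul (x (s 1)) (x (s 2)))
  else mul (mul (x (s 0)) (x (s 1))) (x (s 2)).

Definition poly_eval (K : fieldType) (A : lmodType K) (mul : A -> A -> A)
  (f : {ffun mono -> K}) (x : 'I_3 -> A) : A :=
  \sum_(m : mono) f m *: mono_eval mul x m.

(* The arity-3 component of the operad of a variety: the multilinear   *)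
(* degree-3 identities satisfied by every algebra of the class.  For a *)
(* variety defined by degree-3 identities this is the quadratic        *)
(* relation space R of the corresponding (quadratic) operad.           *)
Definition ident3 (K : fieldType) (P : alg_class K) (f : {ffun mono -> K}) : Prop :=
  forall (A : lmodType K) (mul : A -> A -> A),
    bilinear_prod mul -> P A mul -> forall x : 'I_3 -> A, poly_eval mul f x = 0.

Definition gk_pairing (K : fieldType) (f g : {ffun mono -> K}) : K :=
  \sum_(s : 'S_3) (-1) ^+ odd_perm s *
     (f (s, false) * g (s, false) - f (s, true) * g (s, true)).

Definition koszul_dual_rel (K : fieldType) (R : {ffun mono -> K} -> Prop)
  (g : {ffun mono -> K}) : Prop :=
  forall f, R f -> gk_pairing f g = 0.

(* Both sides are cut out by the same four linear conditions on the twelve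
   coefficients of g.  In an alternative
   left-commutative algebra the associator is alternating and a(bc) = b(ac), so every
   multilinear cubic monomial reduces to one of the three products x_i(x_j x_k),
   determined by k, or to the associator (x_0, x_1, x_2); the four conditions say that
   the coefficients of g on these normal forms vanish.  Up to sign they are also the
   Ginzburg-Kapranov pairings of g with the left-symmetric relations
   (a,b,c) - (b,a,c) and with A_1.
   For the converse inclusions, any coefficient vector h defines a nilpotent algebra on
   x_i, x_i x_j and one top vector z in which a multilinear f evaluates to (f . h) z;
   suitable choices of h force the four conditions on every identity of Alt_LC, and
   the twist of g by the pairing annihilates every identity of LS_{A_1}. *)

From Pilot Require Import Defs.
From HB Require Import structures.
From mathcomp Require Import all_boot all_order all_algebra all_fingroup.
From mathcomp Require Import ring.
Import GRing.Theory.
Local Open Scope ring_scope.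

(* As (s * t) i = t (s i), the monomial indexed by t01 * s is that of s with its
   first two letters swapped. *)
Local Notation t01 := (tperm (0 : 'I_3) 1).
Local Notation t12 := (tperm (1 : 'I_3) 2).
Local Notation sgn s := ((-1) ^+ odd_perm s).

Lemma perm3_ext (s t : 'S_3) : s 0 = t 0 -> s 1 = t 1 -> s 2 = t 2 -> s = t.
Proof.
move=> s0 s1 s2; apply/permP => -[[|[|[|i]]] lti] //.
- by rewrite (_ : Ordinal lti = 0) //; apply: val_inj.
- by rewrite (_ : Ordinal lti = 1) //; apply: val_inj.
- by rewrite (_ : Ordinal lti = 2) //; apply: val_inj.
Qed.

Definition perm3_seq : seq 'S_3 := [:: 1; t01; t12; t01 * t12; t12 * t01; t01 * t12 * t01]%g.

Lemma perm3_seq_uniq : uniq perm3_seq.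
Proof.
apply: (@map_uniq _ _ (fun s : 'S_3 => (s 0, s 1))).
by rewrite /= !permM !perm1 !permE.
Qed.

Lemma mem_perm3_seq (s : 'S_3) : s \in perm3_seq.
Proof.
have card_seq : #|perm3_seq| = #|'S_3| by rewrite (card_uniqP perm3_seq_uniq) card_Sn.
by have /subset_cardP/(_ (subset_predT _)) -> := card_seq.
Qed.

Lemma sum_perm3 (V : nmodType) (F : 'S_3 -> V) :
  \sum_s F s =
  F 1%g + F t01 + F t12 + F (t01 * t12)%g + F (t12 * t01)%g + F (t01 * t12 * t01)%g.
Proof.
rewrite -(eq_bigl _ _ mem_perm3_seq) -big_uniq ?perm3_seq_uniq //.
by rewrite !big_cons big_nil /= addr0 !addrA.
Qed.

Lemma perm3_ind (P : 'S_3 -> Prop) :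
  P 1%g -> (forall s, P s -> P (t01 * s)%g) -> (forall s, P s -> P (t12 * s)%g) ->
  forall s, P s.
Proof.
move=> P1 P01 P12 s.
have Pt01 : P t01 by rewrite -(mulg1 t01); exact: P01.
have Pt12 : P t12 by rewrite -(mulg1 t12); exact: P12.
have := mem_perm3_seq s; rewrite !inE -mulgA.
by do ![case/orP=> [/eqP-> |]]; [| | | exact: P01 | exact: P12 | move/eqP->; exact/P01/P12].
Qed.

Lemma pchar0_eq_opp_eq0 {K : fieldType} {V : lmodType K} (v : V) :
  [pchar K] =i pred0 -> v = - v -> v = 0.
Proof.
move=> /pcharf0P charK0 /eqP; rewrite -subr_eq0 opprK -mulr2n -scaler_nat.
by rewrite scaler_eq0 charK0 => /eqP.
Qed.

Section MonoCoefficients.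
Context {K : fieldType}.
Implicit Types (f g h : {ffun mono -> K}) (s : 'S_3) (m : mono).

Lemma big_mono (V : nmodType) (F : mono -> V) :
  \sum_m F m = \sum_(s : 'S_3) (F (s, false) + F (s, true)).
Proof.
rewrite (eq_bigr (fun m => F (m.1, m.2))); last by case.
rewrite -(pair_bigA _ (fun s b => F (s, b))) /=.
by apply: eq_bigr => s _; rewrite big_bool addrC.
Qed.

Definition mono_dot f h : K := \sum_m f m * h m.

Definition mono_vec m : {ffun mono -> K} := [ffun m' => (m' == m)%:R].
Definition assoc_vec s : {ffun mono -> K} := mono_vec (s, false) - mono_vec (s, true).
Definition ls_vec s : {ffun mono -> K} := assoc_vec s - assoc_vec (t01 * s).
Definition a1_vec : {ffun mono -> K} := [ffun m => (~~ m.2)%:R].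

Definition assoc_coef h s : K := h (s, false) - h (s, true).
Definition perm_coef h s : K := h (s, false) + h (s, true).

(* The coefficients of the normal form of g in an alternative left-commutative
   algebra: [lc_coord g s] is that of x_(s 0) (x_(s 1) x_(s 2)) = x_(s 1) (x_(s 0) x_(s 2))
   and [assoc_coord g] that of the associator (x_0, x_1, x_2). *)
Definition lc_coord g s : K := perm_coef g s + perm_coef g (t01 * s).
Definition assoc_coord g : K := \sum_s sgn s * g (s, false).

Definition perm_vec s : {ffun mono -> K} := [ffun m => (m.1 == s)%:R].
Definition lc_coord_vec s : {ffun mono -> K} := perm_vec s + perm_vec (t01 * s).
Definition assoc_coord_vec : {ffun mono -> K} := [ffun m => if m.2 then 0 else sgn m.1].

Definition gk_twist g : {ffun mono -> K} :=
  [ffun m => sgn m.1 * (if m.2 then - g m else g m)].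

Lemma mono_dotBl f f' h : mono_dot (f - f') h = mono_dot f h - mono_dot f' h.
Proof. by rewrite /mono_dot -sumrB; apply: eq_bigr => m _; rewrite !ffunE mulrBl. Qed.

Lemma mono_dot_vecl m h : mono_dot (mono_vec m) h = h m.
Proof.
rewrite /mono_dot (bigD1 m) //= ffunE eqxx mul1r big1 ?addr0 // => m' /negbTE ne.
by rewrite ffunE ne mul0r.
Qed.

Lemma mono_dot_assoc_vec s h : mono_dot (assoc_vec s) h = assoc_coef h s.
Proof. by rewrite mono_dotBl !mono_dot_vecl. Qed.

Lemma mono_dot_perm_vec g s : mono_dot g (perm_vec s) = perm_coef g s.
Proof.
rewrite /mono_dot big_mono (bigD1 s) //= !ffunE eqxx !mulr1 big1 ?addr0 // => t /negbTE ne.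
by rewrite !ffunE /= ne !mulr0 addr0.
Qed.

Lemma mono_dot_lc_coord_vec g s : mono_dot g (lc_coord_vec s) = lc_coord g s.
Proof.
rewrite /lc_coord -!mono_dot_perm_vec /mono_dot -big_split.
by apply: eq_bigr => m _; rewrite !ffunE mulrDr.
Qed.

Lemma perm_coef_t01 {g s} : lc_coord g s = 0 -> perm_coef g (t01 * s) = - perm_coef g s.
Proof. by move/eqP; rewrite /lc_coord addrC addr_eq0 => /eqP. Qed.

Lemma assoc_coef_gk_twist g s : assoc_coef (gk_twist g) s = sgn s * perm_coef g s.
Proof. by rewrite /assoc_coef /perm_coef !ffunE /= mulrN opprK -mulrDr. Qed.

Lemma mono_dot_assoc_coord_vec g : mono_dot g assoc_coord_vec = assoc_coord g.
Proof.
by rewrite /mono_dot big_mono; apply: eq_bigr => s _; rewrite !ffunE /= mulr0 addr0 mulrC.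
Qed.

Lemma gk_pairingE f g : gk_pairing f g = mono_dot f (gk_twist g).
Proof.
rewrite /gk_pairing /mono_dot big_mono; apply: eq_bigr => s _; rewrite !ffunE /=.
by move: (sgn s) => e; ring.
Qed.

Lemma gk_pairing_ls_vec s g : gk_pairing (ls_vec s) g = sgn s * lc_coord g s.
Proof.
rewrite gk_pairingE mono_dotBl !mono_dot_assoc_vec /assoc_coef /lc_coord /perm_coef !ffunE /=.
rewrite odd_mul_tperm /= signrN; move: (sgn s) => e; ring.
Qed.

Lemma gk_pairing_a1_vec g : gk_pairing a1_vec g = assoc_coord g.
Proof.
rewrite gk_pairingE /mono_dot big_mono; apply: eq_bigr => s _.
by rewrite !ffunE /= mul1r mul0r addr0.
Qed.

End MonoCoefficients.

Section PolyEval.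
Context {K : fieldType} {A : lmodType K}.
Variables (mul : A -> A -> A) (x : 'I_3 -> A).

Lemma poly_evalB (f f' : {ffun mono -> K}) :
  poly_eval mul (f - f') x = poly_eval mul f x - poly_eval mul f' x.
Proof. by rewrite /poly_eval -sumrB; apply: eq_bigr => m _; rewrite !ffunE scalerBl. Qed.

Lemma poly_eval_vec m : poly_eval mul (mono_vec m) x = mono_eval mul x m.
Proof.
rewrite /poly_eval (bigD1 m) //= ffunE eqxx scale1r big1 ?addr0 // => m' /negbTE ne.
by rewrite ffunE ne scale0r.
Qed.

Lemma poly_eval_assoc_vec s :
  poly_eval mul (assoc_vec s) x = assoc mul (x (s 0)) (x (s 1)) (x (s 2)).
Proof. by rewrite poly_evalB !poly_eval_vec. Qed.

Lemma poly_eval_ls_vec s :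
  poly_eval mul (ls_vec s) x =
  assoc mul (x (s 0)) (x (s 1)) (x (s 2)) - assoc mul (x (s 1)) (x (s 0)) (x (s 2)).
Proof. by rewrite poly_evalB !poly_eval_assoc_vec !permM !permE. Qed.

Lemma poly_eval_a1_vec :
  poly_eval mul a1_vec x = \sum_s mono_eval mul x (s, false).
Proof.
by rewrite /poly_eval big_mono; apply: eq_bigr => s _; rewrite !ffunE scale1r scale0r addr0.
Qed.

Lemma poly_eval_a1_vecE :
  poly_eval mul a1_vec x =
  mul (mul (x 0) (x 1)) (x 2) + mul (mul (x 1) (x 0)) (x 2)
  + mul (mul (x 0) (x 2)) (x 1) + mul (mul (x 2) (x 0)) (x 1)
  + mul (mul (x 1) (x 2)) (x 0) + mul (mul (x 2) (x 1)) (x 0).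
Proof. by rewrite poly_eval_a1_vec sum_perm3 /mono_eval /= !permM !perm1 !permE. Qed.

End PolyEval.

Lemma ls_vec_LS_A1 {K : fieldType} (s : 'S_3) : ident3 (@LS_A1 K) (ls_vec s).
Proof. by move=> A mul _ [mul_ls _] x; rewrite poly_eval_ls_vec mul_ls subrr. Qed.

Lemma a1_vec_LS_A1 {K : fieldType} : ident3 (@LS_A1 K) a1_vec.
Proof. by move=> A mul _ [_ mul_A1] x; rewrite poly_eval_a1_vecE mul_A1. Qed.

Section Alternative.
Context {K : fieldType} {A : lmodType K}.
Variables (mul : A -> A -> A) (mul_bil : bilinear_prod mul).

Lemma bil_mulDl a b c : mul (a + b) c = mul a c + mul b c.
Proof. by have := mul_bil.1 1 a b c; rewrite !scale1r. Qed.

Lemma bil_mulDr a b c : mul a (b + c) = mul a b + mul a c.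
Proof. by have := mul_bil.2 1 a b c; rewrite !scale1r. Qed.

Lemma assocDl a a' b c : assoc mul (a + a') b c = assoc mul a b c + assoc mul a' b c.
Proof. by rewrite /assoc !bil_mulDl opprD addrACA. Qed.

Lemma assocDm a b b' c : assoc mul a (b + b') c = assoc mul a b c + assoc mul a b' c.
Proof. by rewrite /assoc !bil_mulDl !bil_mulDr bil_mulDl opprD addrACA. Qed.

Lemma assocDr a b c c' : assoc mul a b (c + c') = assoc mul a b c + assoc mul a b c'.
Proof. by rewrite /assoc !bil_mulDr opprD addrACA. Qed.

Hypothesis mul_alt : alternative mul.

Lemma alternative_assoc_swapl a b c : assoc mul b a c = - assoc mul a b c.
Proof.
apply/eqP; rewrite -addr_eq0 addrC; apply/eqP.
have := (mul_alt (a + b) c).1.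
by rewrite assocDl !assocDm (mul_alt a c).1 (mul_alt b c).1 add0r addr0.
Qed.

Lemma alternative_assoc_swapr a b c : assoc mul a c b = - assoc mul a b c.
Proof.
apply/eqP; rewrite -addr_eq0 addrC; apply/eqP.
have := (mul_alt a (b + c)).2.
by rewrite assocDm !assocDr (mul_alt a b).2 (mul_alt a c).2 add0r addr0.
Qed.

Lemma alternative_assoc_perm (x : 'I_3 -> A) (s : 'S_3) :
  assoc mul (x (s 0)) (x (s 1)) (x (s 2)) = sgn s *: assoc mul (x 0) (x 1) (x 2).
Proof.
elim/perm3_ind: s => [|s IHs|s IHs]; first by rewrite odd_perm1 scale1r !perm1.
- by rewrite !permM !permE /= alternative_assoc_swapl IHs odd_mul_tperm /= signrN scaleNr.
- by rewrite !permM !permE /= alternative_assoc_swapr IHs odd_mul_tperm /= signrN scaleNr.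
Qed.

End Alternative.

Lemma Alt_LC_ident3 {K : fieldType} (g : {ffun mono -> K}) :
  [pchar K] =i pred0 -> (forall s, lc_coord g s = 0) -> assoc_coord g = 0 ->
  ident3 (@Alt_LC K) g.
Proof.
move=> charK0 lc_g0 assoc_g0 A mul mul_bil [mul_alt mul_lc] x.
pose R (s : 'S_3) := mul (x (s 0)) (mul (x (s 1)) (x (s 2))).
have expand : poly_eval mul g x = \sum_s perm_coef g s *: R s
    + \sum_s g (s, false) *: assoc mul (x (s 0)) (x (s 1)) (x (s 2)).
  rewrite /poly_eval big_mono -big_split; apply: eq_bigr => s _.
  rewrite /mono_eval /= /assoc /perm_coef scalerDl scalerBr.
  by rewrite addrAC (addrC (_ *: R s)) subrK.
have R_t01 s : R (t01 * s)%g = R s by rewrite /R !permM !permE /= mul_lc.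
have sym0 : \sum_s perm_coef g s *: R s = 0.
  (* reindexing by s |-> t01 * s fixes R and negates the coefficients *)
  apply: pchar0_eq_opp_eq0 => //.
  rewrite {1}(reindex_inj (mulgI t01)) -sumrN; apply: eq_bigr => s _.
  by rewrite R_t01 (perm_coef_t01 (lc_g0 s)) scaleNr.
have alt0 : \sum_s g (s, false) *: assoc mul (x (s 0)) (x (s 1)) (x (s 2)) = 0.
  under eq_bigr do rewrite alternative_assoc_perm // scalerA mulrC.
  by rewrite -scaler_suml -[\sum_s _]/(assoc_coord g) assoc_g0 scale0r.
by rewrite expand sym0 alt0 addr0.
Qed.

Section TestAlgebra.
Context {K : fieldType}.
Variable h : {ffun mono -> K}.

Local Notation vec := {ffun 'I_3 -> K^o}.

Definition tri (v : 'S_3 -> K) (a b c : vec) : K :=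
  \sum_(s : 'S_3) a (s 0) * b (s 1) * c (s 2) * v s.

Lemma eq_tri v w a b c : v =1 w -> tri v a b c = tri w a b c.
Proof. by move=> eq_vw; apply: eq_bigr => s _; rewrite eq_vw. Qed.

Lemma triB v w a b c : tri v a b c - tri w a b c = tri (fun s => v s - w s) a b c.
Proof. by rewrite /tri -sumrB; apply: eq_bigr => s _; rewrite mulrBr. Qed.

Lemma triN v a b c : tri (fun s => - v s) a b c = - tri v a b c.
Proof. by rewrite /tri -sumrN; apply: eq_bigr => s _; rewrite mulrN. Qed.

Lemma tri_swapl v a b c : tri v b a c = tri (fun s => v (t01 * s)%g) a b c.
Proof.
rewrite /tri (reindex_inj (mulgI t01)); apply: eq_bigr => s _ /=.
by rewrite !permM !permE /= [b _ * a _]mulrC.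
Qed.

Lemma tri_swapr v a b c : tri v a c b = tri (fun s => v (t12 * s)%g) a b c.
Proof.
rewrite /tri (reindex_inj (mulgI t12)); apply: eq_bigr => s _ /=.
by rewrite !permM !permE /= [_ * c _ * b _]mulrAC.
Qed.

Lemma tri_perm (p : 'S_3) v (a : 'I_3 -> vec) :
  tri v (a (p 0)) (a (p 1)) (a (p 2)) = tri (fun s => v (p * s)%g) (a 0) (a 1) (a 2).
Proof.
elim/perm3_ind: p v => [|p IHp|p IHp] v.
- by rewrite !perm1; apply: eq_tri => s; rewrite mul1g.
- rewrite !permM !permE /= tri_swapl IHp; by apply: eq_tri => s; rewrite mulgA.
- rewrite !permM !permE /= tri_swapr IHp; by apply: eq_tri => s; rewrite mulgA.
Qed.

Definition test_space := (vec * {ffun 'I_3 * 'I_3 -> K^o} * K^o)%type.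

(* Components of degree 1, 2 and 3: (x_i x_j) x_k = h ((i j k), false) z and
   x_i (x_j x_k) = h ((i j k), true) z for distinct i, j, k; all other products of
   three generators vanish. *)
Definition test_mul (u w : test_space) : test_space :=
  (0, [ffun ij => u.1.1 ij.1 * w.1.1 ij.2],
   \sum_(s : 'S_3) (u.1.1 (s 0) * w.1.2 (s 1, s 2) * h (s, true)
                    + u.1.2 (s 0, s 1) * w.1.1 (s 2) * h (s, false))).

Lemma test_spaceP (u w : test_space) :
  u.1.1 = w.1.1 -> u.1.2 = w.1.2 -> u.2 = w.2 -> u = w.
Proof. by case: u => [[? ?] ?]; case: w => [[? ?] ?] /= -> -> ->. Qed.

Definition test_top (z : K) : test_space := (0, 0, z).

Lemma test_topD z z' : test_top (z + z') = test_top z + test_top z'.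
Proof. by apply: test_spaceP => //=; apply/esym/addr0. Qed.

Lemma test_mul_bilinear : bilinear_prod test_mul.
Proof.
split=> k a b c; apply: test_spaceP => /=; rewrite ?scaler0 ?addr0 //.
- by apply/ffunP => ij; rewrite !ffunE mulrDl scalerAl.
- rewrite scaler_sumr -big_split; apply: eq_bigr => s _; rewrite !ffunE.
  by rewrite /GRing.scale /=; ring.
- by apply/ffunP => ij; rewrite !ffunE mulrDr scalerAr.
- rewrite scaler_sumr -big_split; apply: eq_bigr => s _; rewrite !ffunE.
  by rewrite /GRing.scale /=; ring.
Qed.

Lemma test_mul_mull u v w :
  test_mul (test_mul u v) w = test_top (tri (fun s => h (s, false)) u.1.1 v.1.1 w.1.1).
Proof.
apply: test_spaceP => //=; first by apply/ffunP => ij; rewrite !ffunE mul0r.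
by apply: eq_bigr => s _; rewrite !ffunE /= !mul0r add0r.
Qed.

Lemma test_mul_mulr u v w :
  test_mul u (test_mul v w) = test_top (tri (fun s => h (s, true)) u.1.1 v.1.1 w.1.1).
Proof.
apply: test_spaceP => //=; first by apply/ffunP => ij; rewrite !ffunE mulr0.
by apply: eq_bigr => s _; rewrite !ffunE /= mulr0 mul0r addr0 mulrA.
Qed.

Lemma test_assoc u v w :
  assoc test_mul u v w = test_top (tri (assoc_coef h) u.1.1 v.1.1 w.1.1).
Proof.
rewrite /assoc test_mul_mull test_mul_mulr; apply: test_spaceP => /=; rewrite ?subrr //.
exact: triB.
Qed.

Definition test_basis (i : 'I_3) : test_space := ([ffun j => (i == j)%:R], 0, 0).

Lemma tri_test_basis v (s : 'S_3) :
  tri v (test_basis (s 0)).1.1 (test_basis (s 1)).1.1 (test_basis (s 2)).1.1 = v s.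
Proof.
rewrite /tri (bigD1 s) //= !ffunE !eqxx !mul1r big1 ?addr0 // => t ne_ts; rewrite !ffunE.
case: (s 0 =P t 0) => [e0 | _]; last by rewrite !mul0r.
case: (s 1 =P t 1) => [e1 | _]; last by rewrite mulr0 !mul0r.
case: (s 2 =P t 2) => [e2 | _]; last by rewrite mulr0 mul0r.
by case/eqP: ne_ts; apply: perm3_ext.
Qed.

Lemma mono_eval_test_basis m : mono_eval test_mul test_basis m = test_top (h m).
Proof.
case: m => s []; rewrite /mono_eval /= ?test_mul_mull ?test_mul_mulr tri_test_basis //.
Qed.

Lemma poly_eval_test_basis f : (poly_eval test_mul f test_basis).2 = mono_dot f h.
Proof.
rewrite /poly_eval (big_morph (fun u : test_space => u.2) (fun _ _ => erefl) erefl).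
by apply: eq_bigr => m _; rewrite mono_eval_test_basis.
Qed.

Lemma test_ident3 {P : alg_class K} {f : {ffun mono -> K}} :
  ident3 P f -> P _ test_mul -> mono_dot f h = 0.
Proof.
by move=> Pf P_test; rewrite -poly_eval_test_basis (Pf _ _ test_mul_bilinear P_test).
Qed.

Lemma test_mul_left_symmetric :
  (forall s, assoc_coef h (t01 * s) = assoc_coef h s) -> left_symmetric test_mul.
Proof.
by move=> h_sym a b c; rewrite !test_assoc tri_swapl; congr test_top; apply: eq_tri.
Qed.

Lemma test_mul_identA1 : \sum_s h (s, false) = 0 -> identA1 test_mul.
Proof.
move=> h_sum0 a b c; pose x (i : 'I_3) := nth 0 [:: a; b; c] i.
transitivity (poly_eval test_mul a1_vec x); first by rewrite poly_eval_a1_vecE.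
have h_sum0t (t : 'S_3) : \sum_s h ((s * t)%g, false) = 0.
  by move: h_sum0; rewrite (reindex_inj (mulIg t)).
rewrite poly_eval_a1_vec.
under eq_bigr do rewrite /mono_eval /= test_mul_mull (tri_perm _ _ (fun i => (x i).1.1)).
rewrite -(big_morph test_top test_topD (erefl _)) [X in test_top X](_ : _ = 0) //.
rewrite /tri exchange_big big1 // => t _.
by rewrite -mulr_sumr h_sum0t mulr0.
Qed.

Lemma test_mul_alternative :
  [pchar K] =i pred0 ->
  (forall s, assoc_coef h (t01 * s) = - assoc_coef h s) ->
  (forall s, assoc_coef h (t12 * s) = - assoc_coef h s) -> alternative test_mul.
Proof.
move=> charK0 h01 h12 a b; rewrite !test_assoc.
split; congr test_top; apply: (@pchar0_eq_opp_eq0 _ K^o) => //.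
  by rewrite {1}tri_swapl (eq_tri _ _ _ _ _ h01) triN.
by rewrite {1}tri_swapr (eq_tri _ _ _ _ _ h12) triN.
Qed.

Lemma test_mul_left_commutative :
  (forall s, h ((t01 * s)%g, true) = h (s, true)) -> Defs.left_commutative test_mul.
Proof.
by move=> h_sym a b c; rewrite !test_mul_mulr tri_swapl; congr test_top; apply: eq_tri.
Qed.

End TestAlgebra.

Lemma ident3_Alt_LCP {K : fieldType} (g : {ffun mono -> K}) :
  [pchar K] =i pred0 ->
  ident3 (@Alt_LC K) g <-> (forall s, lc_coord g s = 0) /\ assoc_coord g = 0.
Proof.
move=> charK0; split=> [g_id | [lc0 assoc0]]; last exact: Alt_LC_ident3.
split=> [s|].
  rewrite -mono_dot_lc_coord_vec; apply: (test_ident3 _ g_id); split.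
    by apply: test_mul_alternative => // t; rewrite /assoc_coef !ffunE /= !subrr oppr0.
  apply: test_mul_left_commutative => t; rewrite !ffunE /= (inj_eq (mulgI _)) addrC.
  by rewrite (canF_eq (mulKg t01)) tpermV.
rewrite -mono_dot_assoc_coord_vec; apply: (test_ident3 _ g_id); split.
  apply: test_mul_alternative => // t;
  by rewrite /assoc_coef !ffunE /= odd_mul_tperm signrN !subr0.
by apply: test_mul_left_commutative => t; rewrite !ffunE.
Qed.

Lemma koszul_dual_LS_A1P {K : fieldType} (g : {ffun mono -> K}) :
  koszul_dual_rel (ident3 (@LS_A1 K)) g <->
  (forall s, lc_coord g s = 0) /\ assoc_coord g = 0.
Proof.
split=> [g_dual | [lc0 assoc0] f f_id].
  split=> [s|]; last by rewrite -gk_pairing_a1_vec; apply/g_dual/a1_vec_LS_A1.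
  have /eqP := g_dual _ (ls_vec_LS_A1 s).
  by rewrite gk_pairing_ls_vec mulf_eq0 signr_eq0 => /eqP.
rewrite gk_pairingE; apply: (test_ident3 _ f_id); split.
  apply: test_mul_left_symmetric => s; rewrite !assoc_coef_gk_twist (perm_coef_t01 (lc0 s)).
  by rewrite odd_mul_tperm /= signrN mulrNN.
by apply: test_mul_identA1; rewrite -[RHS]assoc0; apply: eq_bigr => s _; rewrite ffunE.
Qed.

Theorem mainTheorem3 (K : fieldType) (charK0 : [pchar K] =i pred0) :
  forall g : {ffun mono -> K},
    koszul_dual_rel (ident3 (@LS_A1 K)) g <-> ident3 (@Alt_LC K) g.
Proof. by move=> g; rewrite koszul_dual_LS_A1P ident3_Alt_LCP. Qed.
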